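(* Let $\kappa$ be a regular infinite cardinal. If a Boolean algebra $B$ has the $\kappa$-FN, then $c(B)\le 2^{<\kappa}$ and $\mathrm{Length}(B)\le 2^{<\kappa}$.
   Context: For an infinite cardinal $\kappa$, a Boolean algebra $B$ has the $\kappa$-Freese–Nation property ($\kappa$-FN) if there is a map $f:B\to[B]^{<\kappa}$ such that for all $a,b\in B$ with $a\le b$ there is $c\in f(a)\cap f(b)$ with $a\le c\le b$. $c(B)$ (cellularity) is the supremum of cardinalities of sets of pairwise disjoint nonzero elements of $B$; $\mathrm{Length}(B)$ is the supremum of cardinalities of subsets of $B$ linearly ordered by the Boolean order. *)

(* Boolean algebras are ctbDistrLatticeType (complemented
   distributive lattices with top and bottom) from mathcomp order. *)
From HB Require Import structures.
From mathcomp Require Import all_boot all_order.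
Set Implicit Arguments. Unset Strict Implicit. Unset Printing Implicit Defensive.
Import Order.Theory.

Definition le_card (X Y : Type) : Prop := exists f : X -> Y, injective f.
Definition lt_card (X Y : Type) : Prop := le_card X Y /\ ~ le_card Y X.

Definition segment (K : Type) (lt : K -> K -> Prop) (a : K) : Type :=
  {b : K | lt b a}.

(* (K, lt) is an infinite initial ordinal, i.e. an infinite cardinal kappa
   presented as a well-ordered set of order type kappa. *)
Definition infinite_cardinal (K : Type) (lt : K -> K -> Prop) : Prop :=
  [/\ (forall x, ~ lt x x),
      (forall x y z, lt x y -> lt y z -> lt x z),
      (forall x y, lt x y \/ x = y \/ lt y x) &
      well_founded lt] /\
  le_card nat K /\
  (forall a, lt_card (segment lt a) K).

Definition regular_cardinal (K : Type) (lt : K -> K -> Prop) : Prop :=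
  infinite_cardinal lt /\
  forall S : K -> Prop, lt_card {x | S x} K -> exists a, forall x, S x -> lt x a.

(* ^{<kappa}2 = union over alpha < kappa of functions alpha -> 2; its
   cardinality is 2^{<kappa} (Kunen's definition). *)
Definition two_lt (K : Type) (lt : K -> K -> Prop) : Type :=
  {a : K & segment lt a -> bool}.

Definition kappa_FN (K : Type) (d : Order.disp_t) (B : ctbDistrLatticeType d) : Prop :=
  exists f : B -> B -> Prop,
    (forall a, lt_card {x | f a x} K) /\
    (forall a b : B, (a <= b)%O ->
       exists c, [/\ f a c, f b c, (a <= c)%O & (c <= b)%O]).

Definition disjoint_family (d : Order.disp_t) (B : ctbDistrLatticeType d)
  (A : B -> Prop) : Prop :=
  (forall x, A x -> x != \bot%O) /\
  (forall x y, A x -> A y -> x <> y -> (x `&` y)%O = \bot%O).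

Definition chain (d : Order.disp_t) (B : ctbDistrLatticeType d) (C : B -> Prop) : Prop :=
  forall x y, C x -> C y -> (x <= y)%O \/ (y <= x)%O.

(* Let f witness the kappa-FN of B. We build M ⊆ B of size at most 2^{<kappa} that contains,
   with every z, the complement ~z and every element of f z, and that contains an element
   W(S1, S2) chosen from any two subsets S1, S2 of some f a ∩ M. For x in a disjoint family
   (resp. a chain), let S1 (resp. S1 and S2) be the part of f x ∩ M above (and below) x,
   and let W pick a z of the family below S1 (and above S2, outside S1 ∪ S2). If z ≠ x, the
   FN map yields an element of f x ∩ f ~z (resp. f x ∩ f z) between x and ~z (resp. z);
   it lies in M and contradicts the choice of z. Hence the family lies inside M.
   Such an M is the closure of the empty set under at most kappa operations of arity < kappa.
   Its elements are values of well-founded terms, and by regularity each term is coded by a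
   0-1 sequence of length < kappa, via an injection kappa x kappa -> kappa. *)

From mathcomp Require Import all_boot all_order.
From Stdlib Require Import Classical ClassicalEpsilon ProofIrrelevance.
From Stdlib Require Import FunctionalExtensionality PropExtensionality.

Lemma epsilon_eq {T : Type} (i : inhabited T) (x : T) : epsilon i (fun y => y = x) = x.
Proof. exact: (epsilon_spec i (fun y => y = x) (ex_intro _ x erefl)). Qed.

Definition inv_sig {X Y : Type} (x0 : X) {S : X -> Prop} (e : {x | S x} -> Y) (y : Y) : X :=
  epsilon (inhabits x0) (fun x => exists h : S x, e (exist _ x h) = y).

Lemma inv_sigK {X Y : Type} (x0 : X) {S : X -> Prop} (e : {x | S x} -> Y) :
  injective e -> forall x (h : S x), inv_sig x0 e (e (exist _ x h)) = x.
Proof.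
move=> e_inj x h; rewrite /inv_sig; set Q := fun x' => _.
have [h' /e_inj /(congr1 (@proj1_sig _ _)) //] : Q (epsilon (inhabits x0) Q).
by apply: (epsilon_spec _ Q); exists x, h.
Qed.

Lemma le_card_sub {X Y : Type} {S T : X -> Prop} :
  (forall x, S x -> T x) -> le_card {x | T x} Y -> le_card {x | S x} Y.
Proof.
move=> ST [g g_inj]; exists (fun s => g (exist _ (proj1_sig s) (ST _ (proj2_sig s)))).
by move=> [x Sx] [x' Sx'] /g_inj [e]; apply: subset_eq_compat.
Qed.

Lemma lt_card_sub {X Y : Type} {S T : X -> Prop} :
  (forall x, S x -> T x) -> lt_card {x | T x} Y -> lt_card {x | S x} Y.
Proof.
move=> ST [TY YT]; split; first exact: le_card_sub ST TY.
move=> [g g_inj]; apply: YT; exists (fun y => exist _ (proj1_sig (g y)) (ST _ (proj2_sig (g y)))).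
move=> y y' [e]; apply: g_inj.
by move: (g y) (g y') e => [x Sx] [x' Sx'] /= e; apply: subset_eq_compat.
Qed.

Section RegularCardinal.
Context {K : Type} {lt : K -> K -> Prop} (HK : regular_cardinal lt).

Lemma lt_irrefl x : ~ lt x x.
Proof. by case: HK => [[[H _ _ _] _] _]. Qed.

Lemma lt_trans {x y z} : lt x y -> lt y z -> lt x z.
Proof. by case: HK => [[[_ H _ _] _] _]; apply: H. Qed.

Lemma lt_trichotomy x y : lt x y \/ x = y \/ lt y x.
Proof. by case: HK => [[[_ _ H _] _] _]. Qed.

Lemma lt_wf : well_founded lt.
Proof. by case: HK => [[[_ _ _ H] _] _]. Qed.

Lemma le_card_nat : le_card nat K.
Proof. by case: HK => [[_ [H _]] _]. Qed.

Definition small (X : Type) : Prop := ~ le_card K X.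

Definition bounded (U : K -> Prop) : Prop := exists b, forall k, U k -> lt k b.

Lemma small_inj {X Y} {g : X -> Y} : injective g -> small Y -> small X.
Proof. by move=> g_inj sY [h h_inj]; apply: sY; exists (g \o h) => a b /g_inj /h_inj. Qed.

Lemma small_segment a : small (segment lt a).
Proof. by case: HK => [[_ [_ H]] _]; case: (H a). Qed.

Lemma small_unit : small unit.
Proof.
case: le_card_nat => n n_inj [h h_inj].
by have /n_inj : n 0 = n 1 by apply: h_inj; case: (h (n 0)); case: (h (n 1)).
Qed.

Lemma bounded_small_image {X} (g : X -> K) : small X -> exists b, forall x, lt (g x) b.
Proof.
move=> sX; pose S k := exists x, g x = k.
pose pre (s : {k | S k}) : X := proj1_sig (constructive_indefinite_description _ (proj2_sig s)).
have preK s : g (pre s) = proj1_sig s.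
  by rewrite /pre; case: constructive_indefinite_description.
have pre_inj : injective pre.
  move=> [k1 h1] [k2 h2] e; apply: subset_eq_compat.
  by have := preK (exist _ k1 h1); rewrite e preK.
have [|b Hb] := proj2 HK S.
  split; first by exists (@proj1_sig _ S) => -[k1 h1] [k2 h2] /= e; apply: subset_eq_compat.
  exact: small_inj pre_inj sX.
by exists b => x; apply: Hb; exists x.
Qed.

(* An injection K -> X * Y would have bounded fibres over X (they inject into Y), and a common
   bound b of these bounds would lie below itself. *)
Lemma small_prod {X Y} : small X -> small Y -> small (X * Y).
Proof.
move=> sX sY [g g_inj].
have bound_fiber x : exists b, forall k, (g k).1 = x -> lt k b.
  pose h (s : {k | (g k).1 = x}) : Y := (g (proj1_sig s)).2.
  have h_inj : injective h.
    move=> [k1 e1] [k2 e2] /= e; apply: subset_eq_compat; apply: g_inj.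
    by rewrite [g k1]surjective_pairing [g k2]surjective_pairing e1 e2 /h /= in e *; rewrite e.
  have [b Hb] := bounded_small_image (@proj1_sig _ _) (small_inj h_inj sY).
  by exists b => k e; apply: (Hb (exist _ k e)).
pose beta x := proj1_sig (constructive_indefinite_description _ (bound_fiber x)).
have betaP x k : (g k).1 = x -> lt k (beta x).
  by rewrite /beta; case: constructive_indefinite_description => /= b; apply.
have [b Hb] := bounded_small_image beta sX.
exact: (lt_irrefl b (lt_trans (betaP _ b erefl) (Hb (g b).1))).
Qed.

Lemma bounded_sub {U V : K -> Prop} : (forall k, U k -> V k) -> bounded V -> bounded U.
Proof. by move=> UV [b Hb]; exists b => k /UV /Hb. Qed.

Lemma bounded1 x : bounded (fun k => k = x).
Proof.
have [b Hb] := bounded_small_image (fun _ : unit => x) small_unit.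
by exists b => k ->; apply: (Hb tt).
Qed.

Lemma boundedU {U V : K -> Prop} : bounded U -> bounded V -> bounded (fun k => U k \/ V k).
Proof.
move=> [a Ha] [b Hb].
have [ab|[eab|ba]] := lt_trichotomy a b.
- by exists b => k [/Ha ka|/Hb //]; apply: lt_trans ka ab.
- by subst b; exists a => k [/Ha|/Hb].
- by exists a => k [/Ha //|/Hb kb]; apply: lt_trans kb ba.
Qed.

Lemma bounded_image2 {U V : K -> Prop} (g : K -> K -> K) : bounded U -> bounded V ->
  bounded (fun k => exists u v, [/\ U u, V v & k = g u v]).
Proof.
move=> [a Ha] [b Hb].
pose h (p : segment lt a * segment lt b) := g (proj1_sig p.1) (proj1_sig p.2).
have [c Hc] := bounded_small_image h (small_prod (small_segment a) (small_segment b)).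
by exists c => _ [u [v [/Ha ua /Hb vb ->]]]; apply: (Hc (exist _ u ua, exist _ v vb)).
Qed.

Lemma bounded_image {U : K -> Prop} (g : K -> K) : bounded U ->
  bounded (fun k => exists u, U u /\ k = g u).
Proof.
move=> bU; apply: bounded_sub (bounded_image2 (fun u _ => g u) bU bU).
by move=> _ [u [Uu ->]]; exists u, u.
Qed.

(* [h p] avoids the image of the predecessors of [p], which is bounded, hence not all of [K]. *)
Lemma le_card_wellorder {W : Type} (R : W -> W -> Prop) : well_founded R ->
  (forall p q, p <> q -> R p q \/ R q p) -> (forall p, small {q | R q p}) -> le_card W K.
Proof.
move=> R_wf R_total R_small; have [n _] := le_card_nat.
pose avoid p (rec : forall q, R q p -> K) :=
  epsilon (inhabits (n 0)) (fun k => forall q (Rqp : R q p), rec q Rqp <> k).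
pose h := Fix R_wf (fun _ => K) avoid.
have hE p : h p = avoid p (fun q _ => h q).
  apply: Fix_eq => x r1 r2 E; rewrite /avoid.
  suff -> : (fun k => forall q Rqx, r1 q Rqx <> k) = (fun k => forall q Rqx, r2 q Rqx <> k) by [].
  by apply: functional_extensionality => k; apply: propositional_extensionality; split=> H q Rqx;
    [rewrite -E | rewrite E]; apply: H.
have h_fresh q p : R q p -> h q <> h p.
  move=> Rqp; rewrite [h p]hE /avoid.
  suff /(epsilon_spec (inhabits (n 0))) : exists k, forall q (Rqp : R q p), h q <> k by apply.
  have [b Hb] := bounded_small_image (fun s : {q | R q p} => h (proj1_sig s)) (R_small p).
  exists b => q' Rq'p e; apply: (lt_irrefl b).
  by rewrite -[X in lt X]e; apply: (Hb (exist _ q' Rq'p)).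
exists h => p q e; apply: NNPP => ne.
by case: (R_total p q ne) => [/h_fresh|/h_fresh]; apply.
Qed.

Definition maxK (a b : K) : K := if excluded_middle_informative (lt a b) then b else a.

Lemma le_maxK a b : (a = maxK a b \/ lt a (maxK a b)) /\ (b = maxK a b \/ lt b (maxK a b)).
Proof.
rewrite /maxK; case: excluded_middle_informative => ab /=; first by split; [right|left].
split; [by left|]; have [//|[eab|ba]] := lt_trichotomy a b; [by left|by right].
Qed.

(* Hessenberg's well-order of pairs: by maximum, then lexicographically. *)
Definition maxlex (q p : K * K) : Prop :=
  let: (a, b) := q in let: (a', b') := p in
  lt (maxK a b) (maxK a' b') \/
  (maxK a b = maxK a' b' /\ (lt a a' \/ (a = a' /\ lt b b'))).

Lemma maxlex_wf : well_founded maxlex.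
Proof.
suff acc m a b : maxK a b = m -> Acc maxlex (a, b) by move=> [a b]; exact: acc.
elim/(well_founded_ind lt_wf): m a b => m IHm.
elim/(well_founded_ind lt_wf) => a IHa; elim/(well_founded_ind lt_wf) => b IHb ab_m.
constructor=> -[a' b'] [lt_m|[eq_m [lt_a|[eq_a lt_b]]]].
- by apply: (IHm _ _ _ _ erefl); rewrite -ab_m.
- by apply: (IHa _ lt_a); rewrite eq_m.
- by subst a'; apply: IHb; rewrite // eq_m.
Qed.

Lemma maxlex_total p q : p <> q -> maxlex p q \/ maxlex q p.
Proof.
move: p q => [a b] [a' b'] ne /=.
have [m_lt|[m_eq|m_gt]] := lt_trichotomy (maxK a b) (maxK a' b'); [by left; left| |by right; left].
have [a_lt|[a_eq|a_gt]] := lt_trichotomy a a';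
  [by left; right; split; [|left]| |by right; right; split; [|left]].
subst a'; have [b_lt|[b_eq|b_gt]] := lt_trichotomy b b'; first by left; right; split; [|right].
  by subst b'.
by right; right; split; [|right].
Qed.

Lemma maxlex_small p : small {q | maxlex q p}.
Proof.
move: p => [a' b']; have [m Hm] := bounded1 (maxK a' b').
have below q : maxlex q (a', b') -> lt q.1 m /\ lt q.2 m.
  move: q => [a b] /= q_p.
  have mq_m : lt (maxK a b) m.
    by case: q_p => [lt_m|[-> _]]; [apply: lt_trans lt_m (Hm _ erefl)|apply: Hm].
  have below_m x : x = maxK a b \/ lt x (maxK a b) -> lt x m.
    by case=> [->|/lt_trans]; last apply.
  by case: (le_maxK a b) => /below_m ? /below_m.
pose g (s : {q | maxlex q (a', b')}) : segment lt m * segment lt m :=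
  (exist _ _ (proj1 (below _ (proj2_sig s))), exist _ _ (proj2 (below _ (proj2_sig s)))).
apply: (small_inj (g := g)); last exact: small_prod (small_segment m) (small_segment m).
move=> [[a b] h] [[a2 b2] h2] [e1 e2]; apply: subset_eq_compat.
by move: e1 e2 => /= -> ->.
Qed.

Lemma le_card_pair : le_card (K * K) K.
Proof. exact: le_card_wellorder maxlex_wf maxlex_total maxlex_small. Qed.

Lemma bounded_bool {U : bool -> K -> Prop} :
  (forall b, bounded (U b)) -> bounded (fun k => exists b, U b k).
Proof.
move=> bU; apply: bounded_sub (boundedU (bU true) (bU false)).
by move=> k [[] Uk]; [left|right].
Qed.

Lemma bounded_ltn {U : nat -> K -> Prop} n :
  (forall m, bounded (U m)) -> bounded (fun k => exists m, (m < n)%N /\ U m k).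
Proof.
move=> bU; elim: n => [|n IHn]; first by have [e _] := le_card_nat; exists (e 0) => k [m []].
apply: bounded_sub (boundedU (bU n) IHn) => k [m [m_lt Umk]].
by move: m_lt; rewrite ltnS leq_eqVlt => /orP [/eqP <-|m_lt]; [left|right; exists m].
Qed.

Definition len (t : two_lt lt) : K := projT1 t.

Definition bit (t : two_lt lt) (k : K) : Prop :=
  exists h : lt k (len t), projT2 t (exist _ k h) = true.

Lemma two_lt_ext t t' : len t = len t' -> (forall k, bit t k <-> bit t' k) -> t = t'.
Proof.
move: t t' => [a g] [a' g']; rewrite /len /bit /= => e; subst a' => bits.
congr existT; apply: functional_extensionality => -[k h].
apply/idP/idP => [gk|g'k].
- by have [h' +] := proj1 (bits k) (ex_intro _ h gk); rewrite (proof_irrelevance _ h' h).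
- by have [h' +] := proj2 (bits k) (ex_intro _ h g'k); rewrite (proof_irrelevance _ h' h).
Qed.

Lemma two_lt_of_bounded {U : K -> Prop} : bounded U -> exists t, forall k, bit t k <-> U k.
Proof.
move=> [b Hb].
exists (existT _ b (fun s =>
  if excluded_middle_informative (U (proj1_sig s)) then true else false)).
move=> k; rewrite /bit /=; split=> [[h]|Uk]; first by case: excluded_middle_informative.
by exists (Hb k Uk); case: excluded_middle_informative.
Qed.

Lemma le_card_nat_prod : le_card (nat * K) K.
Proof.
have [pairing pairing_inj] := le_card_pair; have [n n_inj] := le_card_nat.
by exists (fun p => pairing (n p.1, p.2)) => -[m k] [m' k'] /pairing_inj [/n_inj -> ->].
Qed.

Lemma lt_card_subsingleton {X : Type} (S : X -> Prop) :
  (forall x x', S x -> S x' -> x = x') -> lt_card {x | S x} K.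
Proof.
move=> S_sub; have [n n_inj] := le_card_nat; split.
  exists (fun _ => n 0) => -[x Sx] [x' Sx'] _; apply: subset_eq_compat; exact: S_sub.
move=> [g g_inj]; have /n_inj // : n 0 = n 1.
apply: g_inj; case: (g (n 0)) (g (n 1)) => [x Sx] [x' Sx'].
by apply: subset_eq_compat; exact: S_sub.
Qed.

Lemma enumerate_small_set {X : Type} (x0 : X) (S : X -> Prop) : lt_card {y | S y} K ->
  exists (D : K -> Prop) (v : K -> X), bounded D /\ forall y, S y <-> exists i, D i /\ v i = y.
Proof.
move=> [[e e_inj] sS].
have vE := inv_sigK x0 e e_inj.
exists (fun i => exists s, e s = i), (inv_sig x0 e); split.
  by have [b Hb] := bounded_small_image e sS; exists b => _ [s <-].
move=> y; split=> [Sy|[_ [[[y' h'] <-] <-]]]; last by rewrite vE.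
by exists (e (exist _ y Sy)); split; [exists (exist _ y Sy)|rewrite vE].
Qed.

End RegularCardinal.

Arguments small K X : clear implicits.
Arguments bounded {K} lt U.

Section Closure.
Context {K : Type} {lt : K -> K -> Prop} (HK : regular_cardinal lt).
Context (pairing : K * K -> K) (pairing_inj : injective pairing).
Context (natK : nat -> K) (natK_inj : injective natK).
Context {B P : Type} (encP : P -> K) (encP_inj : injective encP).
Context (F : P -> (bool -> B -> Prop) -> B).

Record node := Node { op : P; dom : bool -> K -> Prop; arg : bool -> K -> two_lt lt }.

Definition idx (b : bool) (i : K) : K := pairing (natK b, i).

(* A node is stored as the bounded set of [pairing (natK n, v)] over its fields [n]: the
   operation, the argument indices, and the length and bits of each argument's code. *)
Definition node_field (I : node) (n : nat) (v : K) : Prop :=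
  match n with
  | 0 => v = encP (op I)
  | 1 => exists b i, dom I b i /\ v = idx b i
  | 2 => exists b i, dom I b i /\ v = pairing (idx b i, len (arg I b i))
  | 3 => exists b i j, [/\ dom I b i, bit (arg I b i) j & v = pairing (idx b i, j)]
  | _ => False
  end.

Definition node_set (I : node) (k : K) : Prop :=
  exists n v, node_field I n v /\ k = pairing (natK n, v).

Lemma node_setE I n v : node_set I (pairing (natK n, v)) <-> node_field I n v.
Proof.
split=> [[n' [v' [field_v' /pairing_inj [/natK_inj -> ->]]]] //|field_v].
by exists n, v.
Qed.

Lemma node_field_bounded I :
  (forall b, bounded lt (dom I b)) -> forall n, bounded lt (node_field I n).
Proof.
move=> bdom.
have bidx : bounded lt (fun v => exists b i, dom I b i /\ v = idx b i).
  apply: bounded_sub (bounded_bool HK (fun b => bounded_image HK (idx b) (bdom b))).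
  by move=> _ [b [i [? ->]]]; exists b, i.
have [a Ha] : bounded lt (fun v => exists b i, dom I b i /\ v = len (arg I b i)).
  apply: bounded_sub
    (bounded_bool HK (fun b => bounded_image HK (fun i => len (arg I b i)) (bdom b))).
  by move=> _ [b [i [? ->]]]; exists b, i.
case=> [|[|[|[|n]]]] /=.
- exact: bounded1.
- exact: bidx.
- apply: bounded_sub (bounded_image2 HK (fun u v => pairing (u, v)) bidx (ex_intro _ a Ha)).
  by move=> _ [b [i [? ->]]]; exists (idx b i), (len (arg I b i)); split=> //; exists b, i.
- have bseg : bounded lt (fun j => lt j a) by exists a.
  apply: bounded_sub (bounded_image2 HK (fun u v => pairing (u, v)) bidx bseg).
  move=> _ [b [i [j [dom_i [j_lt _] ->]]]]; exists (idx b i), j; split=> //; first by exists b, i.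
  by apply: (lt_trans HK j_lt); apply: Ha; exists b, i.
- by apply: bounded_sub (bounded1 HK (encP (op I))) => ? [].
Qed.

Lemma node_set_bounded I : (forall b, bounded lt (dom I b)) -> bounded lt (node_set I).
Proof.
move=> /node_field_bounded bfield.
have bnatK : bounded lt (fun u => exists n, (n < 4)%N /\ u = natK n).
  exact: (@bounded_ltn _ _ HK (fun n k => k = natK n) 4 (fun n => bounded1 HK (natK n))).
apply: bounded_sub (bounded_image2 HK (fun u v => pairing (u, v)) bnatK (bounded_ltn HK 4 bfield)).
move=> _ [n [v [field_v ->]]]; have n_lt : (n < 4)%N by move: field_v; case: n => [|[|[|[|]]]].
by exists (natK n), v; split=> //; exists n.
Qed.

Lemma idx_inj b i b' i' : idx b i = idx b' i' -> b = b' /\ i = i'.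
Proof. by move=> /pairing_inj [/natK_inj e ->]; case: b b' e => -[]. Qed.

Lemma node_decode {I J} : (forall k, node_set I k -> node_set J k) ->
  [/\ op I = op J, forall b i, dom I b i -> dom J b i,
      forall b i, dom I b i -> len (arg I b i) = len (arg J b i) &
      forall b i j, dom I b i -> bit (arg I b i) j -> bit (arg J b i) j].
Proof.
move=> IJ; have field n v : node_field I n v -> node_field J n v.
  by rewrite -!node_setE; apply: IJ.
split.
- by have /field /encP_inj : node_field I 0 (encP (op I)) by [].
- move=> b i dom_i; have /field [b' [i' [+ /idx_inj [-> ->]]]] // : node_field I 1 (idx b i).
  by exists b, i.
- move=> b i dom_i.
  have /field [b' [i' [_ /pairing_inj [/idx_inj [-> ->] ->]]]] // :
    node_field I 2 (pairing (idx b i, len (arg I b i))) by exists b, i.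
- move=> b i j dom_i bit_j.
  have /field [b' [i' [j' [_ + /pairing_inj [/idx_inj [-> ->] ->]]]]] // :
    node_field I 3 (pairing (idx b i, j)) by exists b, i, j.
Qed.

Definition node_equiv (I J : node) : Prop :=
  [/\ op I = op J, forall b i, dom I b i <-> dom J b i &
      forall b i, dom I b i -> arg I b i = arg J b i].

Lemma node_equiv_of_set I J : (forall k, node_set I k <-> node_set J k) -> node_equiv I J.
Proof.
move=> IJ; have [opE domIJ lenE bitIJ] := node_decode (fun k => proj1 (IJ k)).
have [_ domJI _ bitJI] := node_decode (fun k => proj2 (IJ k)).
split=> // b i; first by split; [apply: domIJ|apply: domJI].
move=> dom_i; apply: two_lt_ext (lenE _ _ dom_i) _ => j.
by split; [apply: bitIJ|apply: bitJI; apply: domIJ].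
Qed.

Definition node_args (I : node) (v : bool -> K -> B) (b : bool) (y : B) : Prop :=
  exists i, dom I b i /\ v b i = y.

Definition eval (I : node) (v : bool -> K -> B) : B := F (op I) (node_args I v).

Lemma eval_equiv I J v w : node_equiv I J -> (forall b i, dom I b i -> v b i = w b i) ->
  eval I v = eval J w.
Proof.
move=> [opE domE _] vw; rewrite /eval opE; congr F.
apply: functional_extensionality => b; apply: functional_extensionality => y.
apply: propositional_extensionality.
by split=> -[i [dom_i <-]]; exists i; [rewrite -domE -vw|rewrite vw domE].
Qed.

(* [codes t y]: [y] is the value of a term whose root node is encoded by [t] and whose
   arguments are coded by the codes stored in that node. *)
Inductive codes : two_lt lt -> B -> Prop :=
  CodesNode (I : node) (t : two_lt lt) (v : bool -> K -> B) :
    (forall k, bit t k <-> node_set I k) ->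
    (forall b i, dom I b i -> codes (arg I b i) (v b i)) -> codes t (eval I v).

Lemma codes_functional t y y' : codes t y -> codes t y' -> y = y'.
Proof.
move=> c_y; elim: c_y y' => I {}t v t_I _ IHv y' c_y'.
inversion c_y' as [J t' w t_J c_w]; subst.
have IJ : node_equiv I J by apply: node_equiv_of_set => k; rewrite -t_I -t_J.
apply: eval_equiv => // b i dom_i; apply: IHv => //.
by case: IJ => _ domE argE; rewrite argE //; apply: c_w; rewrite -domE.
Qed.

Definition coded (y : B) : Prop := exists t, codes t y.

Lemma le_card_coded : le_card {y | coded y} (two_lt lt).
Proof.
exists (fun s : {y | coded y} =>
  proj1_sig (constructive_indefinite_description (fun t => codes t (proj1_sig s)) (proj2_sig s))).
move=> [y1 h1] [y2 h2] /=.
case: constructive_indefinite_description => t1 c1.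
case: constructive_indefinite_description => t2 c2 /= e.
by subst t2; apply: subset_eq_compat; apply: codes_functional c1 c2.
Qed.

Lemma coded_closed p (S : bool -> B -> Prop) :
  (forall b, lt_card {y | S b y} K) -> (forall b y, S b y -> coded y) -> coded (F p S).
Proof.
move=> small_S coded_S; have [n _] := le_card_nat HK.
have enum b : exists Dv : (K -> Prop) * (K -> B),
    bounded lt Dv.1 /\ forall y, S b y <-> exists i, Dv.1 i /\ Dv.2 i = y.
  by have [D [v ?]] := enumerate_small_set HK (F p S) (S b) (small_S b); exists (D, v).
have [Dv DvP] := choice _ enum.
have code_arg (bi : bool * K) : exists t, (Dv bi.1).1 bi.2 -> codes t ((Dv bi.1).2 bi.2).
  have [dom_i|ndom_i] := classic ((Dv bi.1).1 bi.2); last first.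
    by exists (existT _ (n 0) (fun _ => false)).
  have [t c_t] : coded ((Dv bi.1).2 bi.2) by apply: (coded_S bi.1); apply/(DvP bi.1).2; exists bi.2.
  by exists t.
have [code codeP] := choice _ code_arg.
pose I := Node p (fun b => (Dv b).1) (fun b i => code (b, i)).
have [t tI] := two_lt_of_bounded (node_set_bounded I (fun b => (DvP b).1)).
exists t; have -> : F p S = eval I (fun b => (Dv b).2).
  congr F; apply: functional_extensionality => b; apply: functional_extensionality => y.
  by apply: propositional_extensionality; rewrite (DvP b).2.
by apply: CodesNode tI _ => b i; apply: (codeP (b, i)).
Qed.

End Closure.

Theorem le_card_closure {K : Type} {lt : K -> K -> Prop} (HK : regular_cardinal lt)
  {B P : Type} (F : P -> (bool -> B -> Prop) -> B) : le_card P K ->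
  exists M : B -> Prop, le_card {y | M y} (two_lt lt) /\
    forall p S, (forall b, lt_card {y | S b y} K) -> (forall b y, S b y -> M y) -> M (F p S).
Proof.
move=> [encP encP_inj]; have [pairing pairing_inj] := le_card_pair HK.
have [natK natK_inj] := le_card_nat HK.
exists (coded (lt := lt) pairing natK encP F); split.
  exact: (le_card_coded _ pairing_inj _ natK_inj _ encP_inj F).
by move=> p S; exact: (coded_closed HK pairing natK encP F p S).
Qed.

Section FreeseNation.
Local Open Scope order_scope.
Import Order.Theory.
Context {K : Type} {lt : K -> K -> Prop} (HK : regular_cardinal lt).
Context {d : Order.disp_t} {B : ctbDistrLatticeType d} {f : B -> B -> Prop}.
Hypothesis f_small : forall a, lt_card {x | f a x} K.
Hypothesis f_FN : forall a b : B, a <= b -> exists c, [/\ f a c, f b c, a <= c & c <= b].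

Definition index (a : B) : {x | f a x} -> K :=
  proj1_sig (constructive_indefinite_description _ (proj1 (f_small a))).

Lemma index_inj a : injective (index a).
Proof. by rewrite /index; case: constructive_indefinite_description. Qed.

(* The unary operations read their argument as the element of [S true]. *)
Definition fn_op (p : nat * K) (S : bool -> B -> Prop) (W : (B -> Prop) -> (B -> Prop) -> B) : B :=
  match p with
  | (0, _) => W (S true) (S false)
  | (1, _) => ~` epsilon (inhabits \bot) (S true)
  | (_, k) => let a := epsilon (inhabits \bot) (S true) in inv_sig \bot (index a) k
  end.

Lemma fn_closure (W : (B -> Prop) -> (B -> Prop) -> B) : exists M : B -> Prop,
  [/\ le_card {y | M y} (two_lt lt), forall z, M z -> M (~` z),
      forall z y, M z -> f z y -> M y &
      forall a S1 S2, (forall y, S1 y -> f a y /\ M y) -> (forall y, S2 y -> f a y /\ M y) ->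
        M (W S1 S2)].
Proof.
have [M [M_card M_closed]] := le_card_closure HK (fun p S => fn_op p S W) (le_card_nat_prod HK).
have [k0 _] := le_card_nat HK.
pose single (z : B) (b : bool) (y : B) := if b then y = z else False.
have single_small z b : lt_card {y | single z b y} K.
  by apply: (lt_card_subsingleton HK (single z b)) => y y'; case: b => // -> ->.
have fn_single p z : M z -> M (fn_op p (single z) W).
  by move=> Mz; apply: M_closed => // -[] // y ->.
have eps_single z : epsilon (inhabits \bot) (single z true) = z.
  exact: epsilon_eq.
exists M; split=> //.
- by move=> z /(fn_single (1, k0 0)); rewrite /= eps_single.
- move=> z y Mz fzy; have := fn_single (2, index z (exist _ y fzy)) z Mz.
  by rewrite /= eps_single inv_sigK //; exact: index_inj.
- move=> a S1 S2 S1a S2a; apply: (M_closed (0, k0 0) (fun b => if b then S1 else S2)).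
    by move=> b; apply: lt_card_sub (f_small a) => y; case: b => [/S1a|/S2a] [].
  by case=> y => [/S1a|/S2a] [].
Qed.

Lemma le_card_disjoint_family (A : B -> Prop) :
  disjoint_family A -> le_card {x | A x} (two_lt lt).
Proof.
move=> [A_nz A_disj].
pose below S1 z := A z /\ forall s, S1 s -> z <= s.
pose W S1 (_ : B -> Prop) := epsilon (inhabits \bot) (below S1).
have [M [M_card M_compl M_child M_W]] := fn_closure W.
apply: le_card_sub M_card => x Ax.
pose up c := [/\ f x c, M c & x <= c].
have Mz : M (W up (fun _ => False)) by apply: (M_W x) => y [].
have [Az z_lb] : below up (W up (fun _ => False)).
  by apply: (epsilon_spec _ (below up)); exists x; split=> // s [].
move: (W _ _) Mz Az z_lb => z Mz Az z_lb; have [<-//|zx] := classic (z = x).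
have x_le : x <= ~` z by rewrite -disj_leC A_disj // => /esym.
have [c [fxc fzc xc cz]] := f_FN _ _ x_le.
have /meet_idPl zz : z <= ~` z.
  by apply: le_trans (z_lb c _) cz; split=> //; exact: M_child (M_compl _ Mz) fzc.
by have := A_nz z Az; rewrite -zz meetxC eqxx.
Qed.

Lemma le_card_chain (C : B -> Prop) : chain C -> le_card {x | C x} (two_lt lt).
Proof.
move=> C_chain.
pose between S1 S2 z :=
  [/\ C z, forall s, S1 s -> z <= s, forall s, S2 s -> s <= z & ~ (S1 z \/ S2 z)].
pose W S1 S2 := epsilon (inhabits \bot) (between S1 S2).
have [M [M_card _ M_child M_W]] := fn_closure W.
apply: le_card_sub M_card => x Cx.
pose up c := [/\ f x c, M c & x <= c].
pose down c := [/\ f x c, M c & c <= x].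
have [[[_ Mx _]|[_ Mx _]] //|x_new] := classic (up x \/ down x).
have Mz : M (W up down) by apply: (M_W x) => y [].
have [Cz z_lb z_ub z_new] : between up down (W up down).
  by apply: (epsilon_spec _ (between up down)); exists x; split=> // s [].
move: (W _ _) Mz Cz z_lb z_ub z_new => z Mz Cz z_lb z_ub []; have [zx|xz] := C_chain z x Cz Cx.
- have [c [fzc fxc zc cx]] := f_FN _ _ zx.
  have down_c : down c by split=> //; exact: M_child Mz fzc.
  suff -> : z = c by right.
  by apply/le_anti; rewrite zc z_ub.
- have [c [fxc fzc xc cz]] := f_FN _ _ xz.
  have up_c : up c by split=> //; exact: M_child Mz fzc.
  suff -> : z = c by left.
  by apply/le_anti; rewrite cz z_lb.
Qed.

End FreeseNation.

Theorem corollary4p4 (K : Type) (lt : K -> K -> Prop)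
  (d : Order.disp_t) (B : ctbDistrLatticeType d) :
  regular_cardinal lt -> kappa_FN K B ->
  (forall A : B -> Prop, disjoint_family A -> le_card {x | A x} (two_lt lt)) /\
  (forall C : B -> Prop, chain C -> le_card {x | C x} (two_lt lt)).
Proof.
move=> HK [f [f_small f_FN]]; split=> [A|C].
- exact: (le_card_disjoint_family HK f_small f_FN A).
- exact: (le_card_chain HK f_small f_FN C).
Qed.
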